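(* Let $0<\mu<1/2$ be such that for every $\rho>0$ the spiral $t\mapsto(\rho\cos t,\rho\sin t,\mu\rho t)$ is self-expanded, and let $\alpha=\arccos(1/\sqrt5)$. There exists an integer $N\ge2$ such that for every $r_0>0$, setting $r=Nr_0$ and $\gamma(t)=(r\cos t,r\sin t,\mu rt)$, we have $C(\tau,\alpha)\cap\mathrm{Cyl}(r_0)=\emptyset$ for all $\tau\ge0$, where $\mathrm{Cyl}(r_0)=\{(x,y,z)\in\mathbb{R}^3:x^2+y^2=r_0^2,\ z\in\mathbb{R}\}$.
   Context: $\mathbb{R}^3$ carries the Euclidean inner product $\langle\cdot,\cdot\rangle$ and norm $\|\cdot\|$. A curve is self-expanded if for all $t_1\le t_2\le t_3$: $\|\gamma(t_1)-\gamma(t_2)\|\le\|\gamma(t_1)-\gamma(t_3)\|$. For $v\in\mathbb{S}^2$ and $\alpha\in[0,\pi)$, $C(v,\alpha)=\{u:\langle u,v\rangle>\|u\|\cos\alpha\}\cup\{0\}$, and $C(\tau,\alpha)=\gamma(\tau)+C\big(\gamma'(\tau)/\|\gamma'(\tau)\|,\alpha\big)$. *)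

From Stdlib Require Import Reals Lra.
From Coquelicot Require Import Coquelicot.
Open Scope R_scope.

Definition vec3 : Type := (R * R * R)%type.
Definition mk3 (x y z : R) : vec3 := (x, y, z).
Definition vx (u : vec3) : R := fst (fst u).
Definition vy (u : vec3) : R := snd (fst u).
Definition vz (u : vec3) : R := snd u.
Definition vadd (u v : vec3) : vec3 := mk3 (vx u + vx v) (vy u + vy v) (vz u + vz v).
Definition vsub (u v : vec3) : vec3 := mk3 (vx u - vx v) (vy u - vy v) (vz u - vz v).
Definition vscale (a : R) (u : vec3) : vec3 := mk3 (a * vx u) (a * vy u) (a * vz u).
Definition vzero : vec3 := mk3 0 0 0.
Definition dot (u v : vec3) : R := vx u * vx v + vy u * vy v + vz u * vz v.
Definition vnorm (u : vec3) : R := sqrt (dot u u).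

Definition curve := R -> vec3.

Definition self_expanded (g : curve) : Prop :=
  forall t1 t2 t3 : R, t1 <= t2 -> t2 <= t3 ->
    vnorm (vsub (g t1) (g t2)) <= vnorm (vsub (g t1) (g t3)).

Definition dcurve (g : curve) (t : R) : vec3 :=
  mk3 (Derive (fun s => vx (g s)) t) (Derive (fun s => vy (g s)) t)
      (Derive (fun s => vz (g s)) t).

Definition in_cone (v : vec3) (alpha : R) (u : vec3) : Prop :=
  dot u v > vnorm u * cos alpha \/ u = vzero.

Definition in_Ctau (g : curve) (tau alpha : R) (p : vec3) : Prop :=
  exists u : vec3,
    in_cone (vscale (/ vnorm (dcurve g tau)) (dcurve g tau)) alpha u /\
    p = vadd (g tau) u.

Definition in_Cyl (r0 : R) (p : vec3) : Prop :=
  vx p ^ 2 + vy p ^ 2 = r0 ^ 2.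

Definition spiral (rho mu : R) : curve :=
  fun t => mk3 (rho * cos t) (rho * sin t) (mu * rho * t).

(** In the orthonormal frame (e_r, e_theta, e_z) at gamma(tau) write
    u = a e_r + b e_theta + c e_z.  The unit tangent is proportional to
    e_theta + mu e_z, so u lies in the cone of half-angle
    arccos (1/sqrt 5) iff 5 (b + mu c)^2 > (1 + mu^2) (a^2 + b^2 + c^2)
    with b + mu c > 0, while gamma(tau) + u lies on Cyl(r0) iff
    (r + a)^2 + b^2 = r0^2, which forces b^2 <= r0^2 and a^2 >= (r - r0)^2.
    Completing the square in c, the cone form is at least
    a^2 - (4 + 25 / (1 - 4 mu^2)) b^2, which is nonnegative as soon as
    (N - 1)^2 >= 4 + 25 / (1 - 4 mu^2). *)
From Stdlib Require Import Reals Lra Lia.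
From Coquelicot Require Import Coquelicot.
Open Scope R_scope.

Definition radial_coord (tau : R) (u : vec3) : R :=
  vx u * cos tau + vy u * sin tau.

Definition angular_coord (tau : R) (u : vec3) : R :=
  - vx u * sin tau + vy u * cos tau.

Lemma radial_angular_sqr (tau : R) (u : vec3) :
  radial_coord tau u ^ 2 + angular_coord tau u ^ 2 = vx u ^ 2 + vy u ^ 2.
Proof.
  unfold radial_coord, angular_coord.
  pose proof (sin2_cos2 tau) as Hsc; unfold Rsqr in Hsc.
  transitivity ((vx u ^ 2 + vy u ^ 2) * (sin tau * sin tau + cos tau * cos tau));
    [ring | rewrite Hsc; ring].
Qed.

Lemma dot_self_frame (tau : R) (u : vec3) :
  dot u u = radial_coord tau u ^ 2 + angular_coord tau u ^ 2 + vz u ^ 2.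
Proof. rewrite radial_angular_sqr; unfold dot; ring. Qed.

Lemma vnorm_sqr (u : vec3) : vnorm u ^ 2 = dot u u.
Proof.
  apply pow2_sqrt; unfold dot.
  pose proof (pow2_ge_0 (vx u)); pose proof (pow2_ge_0 (vy u));
    pose proof (pow2_ge_0 (vz u)); nra.
Qed.

Lemma dot_vscale (k : R) (u v : vec3) : dot u (vscale k v) = k * dot u v.
Proof. unfold dot, vscale, mk3, vx, vy, vz; simpl; ring. Qed.

Lemma in_cone_sqr (alpha : R) (d u : vec3) :
  0 < vnorm d -> 0 <= cos alpha ->
  in_cone (vscale (/ vnorm d) d) alpha u ->
  u = vzero \/ dot u u * dot d d * cos alpha ^ 2 < dot u d ^ 2.
Proof.
  intros Hd Hcos [Hcone | Hu]; [right | now left].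
  rewrite dot_vscale in Hcone.
  assert (Hlt : vnorm u * cos alpha * vnorm d < dot u d).
  { replace (dot u d) with (/ vnorm d * dot u d * vnorm d) by (field; lra).
    apply Rmult_lt_compat_r; lra. }
  assert (H0 : 0 <= vnorm u * cos alpha * vnorm d)
    by (repeat apply Rmult_le_pos; [apply sqrt_pos | lra | lra]).
  rewrite <- !vnorm_sqr; nra.
Qed.

Lemma cos_acos_inv_sqrt5 : cos (acos (1 / sqrt 5)) = 1 / sqrt 5.
Proof.
  assert (H1 : 1 <= sqrt 5) by (rewrite <- sqrt_1; apply sqrt_le_1_alt; lra).
  apply cos_acos; split.
  - assert (0 < 1 / sqrt 5) by (apply Rdiv_lt_0_compat; lra); lra.
  - apply (Rmult_le_reg_r (sqrt 5)); [lra|].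
    unfold Rdiv; rewrite Rmult_assoc, Rinv_l by lra; lra.
Qed.

Lemma dcurve_spiral (r mu t : R) :
  dcurve (spiral r mu) t = mk3 (- r * sin t) (r * cos t) (mu * r).
Proof.
  unfold dcurve, spiral, vx, vy, vz, mk3; simpl.
  f_equal; [f_equal|]; apply is_derive_unique; auto_derive; auto; ring.
Qed.

Section SpiralFrame.

Variables (r mu tau : R).
Hypothesis r_gt0 : 0 < r.

Let d := dcurve (spiral r mu) tau.

Lemma dot_dcurve_spiral_self : dot d d = r ^ 2 * (1 + mu ^ 2).
Proof.
  unfold d; rewrite dcurve_spiral.
  pose proof (sin2_cos2 tau) as Hsc; unfold Rsqr in Hsc.
  unfold dot, mk3, vx, vy, vz; simpl.
  transitivity (r ^ 2 * (sin tau * sin tau + cos tau * cos tau + mu ^ 2));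
    [ring | rewrite Hsc; ring].
Qed.

Lemma dot_dcurve_spiral (u : vec3) :
  dot u d = r * (angular_coord tau u + mu * vz u).
Proof.
  unfold d; rewrite dcurve_spiral.
  unfold dot, angular_coord, mk3, vx, vy, vz; simpl; ring.
Qed.

Lemma spiral_cone_frame (u : vec3) :
  in_cone (vscale (/ vnorm d) d) (acos (1 / sqrt 5)) u ->
  u = vzero \/
  (1 + mu ^ 2) * (radial_coord tau u ^ 2 + angular_coord tau u ^ 2 + vz u ^ 2)
    < 5 * (angular_coord tau u + mu * vz u) ^ 2.
Proof.
  pose proof dot_dcurve_spiral_self as Hdd.
  assert (Hd : 0 < vnorm d).
  { unfold vnorm; apply sqrt_lt_R0; rewrite Hdd.
    pose proof (pow2_ge_0 mu); apply Rmult_lt_0_compat; nra. }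
  assert (H5 : 0 < sqrt 5) by (apply sqrt_lt_R0; lra).
  assert (Hcos2 : cos (acos (1 / sqrt 5)) ^ 2 = / 5).
  { rewrite cos_acos_inv_sqrt5; unfold Rdiv.
    rewrite Rmult_1_l, pow_inv, pow2_sqrt by lra; reflexivity. }
  assert (Hcos : 0 <= cos (acos (1 / sqrt 5))).
  { rewrite cos_acos_inv_sqrt5; apply Rlt_le, Rdiv_lt_0_compat; lra. }
  intros Hcone.
  destruct (in_cone_sqr _ _ _ Hd Hcos Hcone)
    as [Hu | Hlt]; [now left | right].
  rewrite Hcos2, Hdd, dot_dcurve_spiral, (dot_self_frame tau) in Hlt.
  apply (Rmult_lt_reg_l (r ^ 2 / 5)); [apply Rdiv_lt_0_compat; nra|].
  lra.
Qed.

Lemma in_Cyl_spiral_add (r0 : R) (u : vec3) :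
  in_Cyl r0 (vadd (spiral r mu tau) u) ->
  (r + radial_coord tau u) ^ 2 + angular_coord tau u ^ 2 = r0 ^ 2.
Proof.
  unfold in_Cyl; intros <-.
  pose proof (sin2_cos2 tau) as Hsc; unfold Rsqr in Hsc.
  transitivity (r ^ 2 * (sin tau * sin tau + cos tau * cos tau)
                + 2 * r * radial_coord tau u
                + (radial_coord tau u ^ 2 + angular_coord tau u ^ 2));
    [rewrite Hsc; ring|].
  rewrite radial_angular_sqr; unfold spiral, vadd, radial_coord, mk3, vx, vy.
  simpl; ring.
Qed.

End SpiralFrame.

Lemma cylinder_offset_bounds (r r0 a b : R) :
  0 < r0 < r -> (r + a) ^ 2 + b ^ 2 = r0 ^ 2 ->
  b ^ 2 <= r0 ^ 2 /\ (r - r0) ^ 2 <= a ^ 2.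
Proof.
  intros Hr Hcyl.
  pose proof (pow2_ge_0 (r + a)); pose proof (pow2_ge_0 b).
  split; [lra|].
  assert (Ha : r + a <= r0) by nra.
  nra.
Qed.

Lemma cone_form_lower_bound (mu a b c : R) :
  0 < mu < 1 / 2 ->
  a ^ 2 - (4 + 25 / (1 - 4 * mu ^ 2)) * b ^ 2
    <= (1 + mu ^ 2) * (a ^ 2 + b ^ 2 + c ^ 2) - 5 * (b + mu * c) ^ 2.
Proof.
  intros Hmu.
  set (K := 1 - 4 * mu ^ 2).
  assert (HK : 0 < K) by (unfold K; nra).
  assert (Hsq : (1 + mu ^ 2) * (a ^ 2 + b ^ 2 + c ^ 2) - 5 * (b + mu * c) ^ 2
                = (1 + mu ^ 2) * a ^ 2 + (mu ^ 2 - 4) * b ^ 2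
                  + K * (c - 5 * mu * b / K) ^ 2 - 25 * mu ^ 2 * b ^ 2 / K)
    by (unfold K in *; field; lra).
  assert (Hmu2 : 25 * mu ^ 2 * b ^ 2 / K <= 25 / K * b ^ 2).
  { replace (25 * mu ^ 2 * b ^ 2 / K) with (mu ^ 2 * (25 / K * b ^ 2))
      by (field; lra).
    assert (0 <= 25 / K * b ^ 2)
      by (apply Rmult_le_pos; [apply Rlt_le, Rdiv_lt_0_compat | apply pow2_ge_0]; lra).
    assert (mu ^ 2 <= 1) by nra; nra. }
  pose proof (pow2_ge_0 a); pose proof (pow2_ge_0 b); pose proof (pow2_ge_0 mu).
  pose proof (pow2_ge_0 (c - 5 * mu * b / K)).
  assert (0 <= K * (c - 5 * mu * b / K) ^ 2) by (apply Rmult_le_pos; lra).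
  nra.
Qed.

Lemma exists_nat_pred_sqr_ge (M : R) :
  exists N : nat, (2 <= N)%nat /\ M <= (INR N - 1) ^ 2.
Proof.
  destruct (INR_unbounded (Rabs M + 2)) as [N HN].
  pose proof (Rle_abs M); pose proof (Rabs_pos M).
  exists N; split; [|nra].
  destruct N as [|[|N]]; simpl in HN; [lra | lra | lia].
Qed.

Theorem lemma4p6 (mu : R) :
  0 < mu < 1 / 2 ->
  (forall rho : R, 0 < rho -> self_expanded (spiral rho mu)) ->
  exists N : nat, (2 <= N)%nat /\
    forall r0 : R, 0 < r0 ->
    forall tau : R, 0 <= tau ->
    forall p : vec3,
      ~ (in_Ctau (spiral (INR N * r0) mu) tau (acos (1 / sqrt 5)) p /\ in_Cyl r0 p).
Proof.
  intros Hmu _.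
  set (M := 4 + 25 / (1 - 4 * mu ^ 2)).
  destruct (exists_nat_pred_sqr_ge M) as [N [HN2 HNM]].
  exists N; split; [exact HN2|].
  intros r0 Hr0 tau _ p [[u [Hcone ->]] Hcyl].
  set (r := INR N * r0) in *.
  assert (HN : 2 <= INR N) by (apply (le_INR 2); exact HN2).
  assert (Hr : 0 < r0 < r) by (unfold r; nra).
  assert (Hgap : M * r0 ^ 2 <= (r - r0) ^ 2).
  { replace (r - r0) with ((INR N - 1) * r0) by (unfold r; ring).
    pose proof (pow2_ge_0 r0); rewrite Rpow_mult_distr; nra. }
  apply in_Cyl_spiral_add in Hcyl.
  destruct (cylinder_offset_bounds _ _ _ _ Hr Hcyl) as [Hb Ha].
  destruct (spiral_cone_frame r mu tau ltac:(lra) u Hcone) as [-> | Hlt].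
  - unfold radial_coord, vzero, mk3, vx, vy in Ha; simpl in Ha; nra.
  - pose proof (cone_form_lower_bound mu (radial_coord tau u)
                  (angular_coord tau u) (vz u) Hmu) as Hform.
    fold M in Hform.
    assert (HM : 0 <= M) by (pose proof (pow2_ge_0 (angular_coord tau u)); nra).
    nra.
Qed.
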